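(* For all complex $q$ with $|q|<1$, $$\sum_{n=0}^\infty \frac{q^{n^2+n}}{(-q;q)_n^2(1+q^{n+1})}=\frac{2}{(q;q)_\infty}\sum_{n=0}^\infty\frac{(-1)^n q^{\frac{3n(n+1)}{2}}(1-q^{2n+1})}{(1+q^n)(1+q^{n+1})}=\frac{2}{(q;q)_\infty}\sum_{n\in\mathbb Z}\frac{(-1)^n q^{\frac{3n(n+1)}{2}}}{1+q^n}.$$
   Context: For $n\in\mathbb N_0\cup\{\infty\}$, $(a;q)_n:=\prod_{j=0}^{n-1}(1-aq^j)$. *)

From Stdlib Require Import Reals ZArith.
Open Scope R_scope.

Record Cplx := mkC { Re : R; Im : R }.

Definition Czero : Cplx := mkC 0 0.
Definition Cone : Cplx := mkC 1 0.
Definition RtoC (x : R) : Cplx := mkC x 0.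
Definition Cadd (z w : Cplx) : Cplx := mkC (Re z + Re w) (Im z + Im w).
Definition Copp (z : Cplx) : Cplx := mkC (- Re z) (- Im z).
Definition Csub (z w : Cplx) : Cplx := Cadd z (Copp w).
Definition Cmul (z w : Cplx) : Cplx :=
  mkC (Re z * Re w - Im z * Im w) (Re z * Im w + Im z * Re w).
Definition Cinv (z : Cplx) : Cplx :=
  mkC (Re z / (Re z * Re z + Im z * Im z)) (- Im z / (Re z * Re z + Im z * Im z)).
Definition Cdiv (z w : Cplx) : Cplx := Cmul z (Cinv w).
Definition Cmod (z : Cplx) : R := sqrt (Re z * Re z + Im z * Im z).

Fixpoint Cpow (z : Cplx) (n : nat) : Cplx :=
  match n with O => Cone | S m => Cmul z (Cpow z m) end.

Definition Csign (n : nat) : Cplx := Cpow (Copp Cone) n.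

Fixpoint Csum (f : nat -> Cplx) (n : nat) : Cplx :=
  match n with O => Czero | S m => Cadd (Csum f m) (f m) end.

Fixpoint Cprod (f : nat -> Cplx) (n : nat) : Cplx :=
  match n with O => Cone | S m => Cmul (Cprod f m) (f m) end.

Definition Ccv (u : nat -> Cplx) (l : Cplx) : Prop :=
  forall eps : R, eps > 0 -> exists N : nat, forall n : nat, (n >= N)%nat ->
    Cmod (Csub (u n) l) < eps.

Definition Cseries (f : nat -> Cplx) (l : Cplx) : Prop := Ccv (Csum f) l.

Definition qpoch (a q : Cplx) (n : nat) : Cplx :=
  Cprod (fun j => Csub Cone (Cmul a (Cpow q j))) n.

Definition qpoch_inf (a q : Cplx) (l : Cplx) : Prop := Ccv (qpoch a q) l.

(* Summand of the bilateral sum, (-1)^n q^{3n(n+1)/2} / (1+q^n), n in Z.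
   For n = -m (m >= 1) we use the identical rational function
   (-1)^m q^{3m(m-1)/2 + m} / (1 + q^m)   (multiply num. and den. by q^m),
   which also gives the value at q = 0 by continuity. *)
Definition bilat_term (q : Cplx) (n : Z) : Cplx :=
  match n with
  | Z0 => Cdiv Cone (Cadd Cone Cone)
  | Zpos p => let k := Pos.to_nat p in
      Cdiv (Cmul (Csign k) (Cpow q (3 * k * (k + 1) / 2)))
           (Cadd Cone (Cpow q k))
  | Zneg p => let m := Pos.to_nat p in
      Cdiv (Cmul (Csign m) (Cpow q (3 * m * (m - 1) / 2 + m)))
           (Cadd Cone (Cpow q m))
  end.

(* The identity is the limiting case of Bailey's lemma for the Bailey pair relative to a = q
     beta_n = 1 / ((-q;q)_n (-q;q)_(n+1)),
     alpha_r = 2 (-1)^r q^(r(r+1)/2) (1 - q^(2r+1)) / ((1 + q^r) (1 + q^(r+1))),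
   i.e. beta_n = sum_(r<=n) alpha_r / ((q;q)_(n-r) (q;q)_(n+r+1)), which is checked by induction on n
   through a telescoping sum.  Substituting this into sum_(n<=N) q^(n^2+n) beta_n / (q;q)_(N-n),
   exchanging the two sums and evaluating the inner one by the finite q-Cauchy identity gives
   sum_(r<=N) q^(r^2+r) alpha_r / ((q;q)_(N-r) (q;q)_(N+r+1)).  Multiplying by (q;q)_N and letting
   N -> oo (Tannery's theorem: all terms are dominated by C |q|^n) yields the first equality; the
   second one splits each summand into the terms of index n and -(n+1) of the bilateral series. *)

From Stdlib Require Import Reals ZArith Lia Lra Field.
From Coquelicot Require Complex.
Open Scope R_scope.

Lemma Cplx_eq (z w : Cplx) : Re z = Re w -> Im z = Im w -> z = w.
Proof. destruct z, w; simpl; intros; subst; reflexivity. Qed.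

Lemma Cring : ring_theory Czero Cone Cadd Cmul Csub Copp (@eq Cplx).
Proof. constructor; intros; apply Cplx_eq; simpl; ring. Qed.

Lemma Cfield : field_theory Czero Cone Cadd Cmul Csub Copp Cdiv Cinv (@eq Cplx).
Proof.
  constructor.
  - exact Cring.
  - intro H. injection H. lra.
  - reflexivity.
  - intros [a b] Hz.
    assert (Hn : a * a + b * b <> 0).
    { intro H0. apply Hz. assert (a = 0) by nra. assert (b = 0) by nra. subst. reflexivity. }
    apply Cplx_eq; simpl; field; exact Hn.
Qed.

Add Field CField : Cfield.

Definition toC (z : Cplx) : Complex.C := (Re z, Im z).

Lemma Cmod_toC z : Cmod z = Complex.Cmod (toC z).
Proof. unfold Cmod, Complex.Cmod, toC; simpl. f_equal. ring. Qed.

Lemma Cmod_mul a b : Cmod (Cmul a b) = Cmod a * Cmod b.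
Proof. rewrite !Cmod_toC. exact (Complex.Cmod_mult (toC a) (toC b)). Qed.

Lemma Cmod_add_le a b : Cmod (Cadd a b) <= Cmod a + Cmod b.
Proof. rewrite !Cmod_toC. exact (Complex.Cmod_triangle (toC a) (toC b)). Qed.

Lemma Cmod_opp a : Cmod (Copp a) = Cmod a.
Proof. rewrite !Cmod_toC. exact (Complex.Cmod_opp (toC a)). Qed.

Lemma Cmod_ge0 a : 0 <= Cmod a.
Proof. rewrite Cmod_toC. apply Complex.Cmod_ge_0. Qed.

Lemma Cmod_one : Cmod Cone = 1.
Proof. unfold Cmod; simpl. replace (1 * 1 + 0 * 0) with 1 by ring. apply sqrt_1. Qed.

Lemma Cmod_two : Cmod (Cadd Cone Cone) = 2.
Proof.
  unfold Cmod; simpl. replace ((1 + 1) * (1 + 1) + (0 + 0) * (0 + 0)) with (2 * 2) by ring.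
  apply sqrt_square. lra.
Qed.

Lemma Cmod_zero : Cmod Czero = 0.
Proof. unfold Cmod; simpl. replace (0 * 0 + 0 * 0) with 0 by ring. apply sqrt_0. Qed.

Lemma Cmod_eq0 a : Cmod a = 0 -> a = Czero.
Proof.
  rewrite Cmod_toC. intro H. apply Complex.Cmod_eq_0 in H.
  injection H. intros. apply Cplx_eq; simpl; auto.
Qed.

Lemma Cmod_gt0 a : a <> Czero -> 0 < Cmod a.
Proof.
  intro H. destruct (Cmod_ge0 a) as [h|h]; auto.
  exfalso. apply H, Cmod_eq0. auto.
Qed.

Lemma Cmod_gt0_neq0 a : 0 < Cmod a -> a <> Czero.
Proof. intros H Z. rewrite Z, Cmod_zero in H. lra. Qed.

Lemma Cmod_sub_le a b : Cmod (Csub a b) <= Cmod a + Cmod b.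
Proof. unfold Csub. rewrite <- (Cmod_opp b). apply Cmod_add_le. Qed.

Lemma Cmod_sub_ge a b : Cmod a - Cmod b <= Cmod (Csub a b).
Proof.
  pose proof (Cmod_add_le (Csub a b) b).
  replace (Cadd (Csub a b) b) with a in H by ring. lra.
Qed.

Lemma Cmod_add_ge a b : Cmod a - Cmod b <= Cmod (Cadd a b).
Proof.
  replace (Cadd a b) with (Csub a (Copp b)) by ring.
  rewrite <- (Cmod_opp b). apply Cmod_sub_ge.
Qed.

Lemma Cmod_sub_sym a b : Cmod (Csub a b) = Cmod (Csub b a).
Proof. replace (Csub a b) with (Copp (Csub b a)) by ring. apply Cmod_opp. Qed.

Lemma Cmod_pow a n : Cmod (Cpow a n) = Cmod a ^ n.
Proof. induction n; simpl. apply Cmod_one. rewrite Cmod_mul, IHn. reflexivity. Qed.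

Lemma Cmod_Csign n : Cmod (Csign n) = 1.
Proof. unfold Csign. rewrite Cmod_pow, Cmod_opp, Cmod_one. apply pow1. Qed.

Lemma Cmod_inv a : a <> Czero -> Cmod (Cinv a) = / Cmod a.
Proof.
  intro H. pose proof (Cmod_gt0 _ H).
  assert (E : Cmul (Cinv a) a = Cone) by (field; auto).
  apply (f_equal Cmod) in E. rewrite Cmod_mul, Cmod_one in E.
  field_simplify_eq; [|lra]. rewrite <- E. ring.
Qed.

Lemma Cmod_div a b : b <> Czero -> Cmod (Cdiv a b) = Cmod a / Cmod b.
Proof. intro H. unfold Cdiv. rewrite Cmod_mul, Cmod_inv; auto. Qed.

Lemma Cmod_inv_le x L : 0 < L -> L <= Cmod x -> Cmod (Cinv x) <= / L.
Proof.
  intros HL Hx. rewrite Cmod_inv by (apply Cmod_gt0_neq0; lra).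
  apply Rinv_le_contravar; lra.
Qed.

Lemma Cmul_neq0 a b : a <> Czero -> b <> Czero -> Cmul a b <> Czero.
Proof.
  intros Ha Hb. apply Cmod_gt0_neq0. rewrite Cmod_mul.
  apply Rmult_lt_0_compat; apply Cmod_gt0; auto.
Qed.

Lemma Cmod_mkC_le a b : Cmod (mkC a b) <= Rabs a + Rabs b.
Proof.
  replace (mkC a b) with (Cadd (mkC a 0) (mkC 0 b)) by (apply Cplx_eq; simpl; ring).
  eapply Rle_trans. apply Cmod_add_le. unfold Cmod; simpl.
  replace (a * a + 0 * 0) with (Rsqr a) by (unfold Rsqr; ring).
  replace (0 * 0 + b * b) with (Rsqr b) by (unfold Rsqr; ring).
  rewrite !sqrt_Rsqr_abs. lra.
Qed.

Lemma Re_le_Cmod a : Rabs (Re a) <= Cmod a.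
Proof. rewrite Cmod_toC. apply (Complex.re_le_Cmod (toC a)). Qed.

Lemma Im_le_Cmod a : Rabs (Im a) <= Cmod a.
Proof.
  rewrite Cmod_toC. pose proof (Complex.Rmax_Cmod (toC a)) as H. simpl in H.
  eapply Rle_trans; [|exact H]. apply Rmax_r.
Qed.

Lemma Ccv_ext u v l : (forall n, u n = v n) -> Ccv u l -> Ccv v l.
Proof.
  intros E H e He. destruct (H e He) as [N HN].
  exists N. intros n Hn. rewrite <- E. auto.
Qed.

Lemma Ccv_const c : Ccv (fun _ => c) c.
Proof.
  intros e He. exists O. intros.
  replace (Csub c c) with Czero by ring. rewrite Cmod_zero. lra.
Qed.

Lemma Ccv_dist_le u l a B :
  Ccv u l -> (exists N0, forall n, (n >= N0)%nat -> Cmod (Csub (u n) a) <= B) ->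
  Cmod (Csub l a) <= B.
Proof.
  intros H [N0 HB]. destruct (Rle_lt_dec (Cmod (Csub l a)) B) as [h|h]; auto.
  destruct (H (Cmod (Csub l a) - B) ltac:(lra)) as [N HN].
  specialize (HN (max N N0) ltac:(lia)). specialize (HB (max N N0) ltac:(lia)).
  pose proof (Cmod_sub_le (Csub (u (max N N0)) a) (Csub (u (max N N0)) l)) as T.
  replace (Csub (Csub (u (max N N0)) a) (Csub (u (max N N0)) l)) with (Csub l a) in T by ring.
  lra.
Qed.

Lemma Ccv_unique u a b : Ccv u a -> Ccv u b -> a = b.
Proof.
  intros Ha Hb.
  assert (D : forall e, e > 0 -> Cmod (Csub a b) <= e).
  { intros e He. apply (Ccv_dist_le u a b e Ha).
    destruct (Hb e He) as [N HN]. exists N. intros n Hn. left. auto. }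
  assert (Z : Cmod (Csub a b) = 0).
  { pose proof (Cmod_ge0 (Csub a b)).
    destruct (Req_dec (Cmod (Csub a b)) 0) as [h|h]; auto.
    specialize (D (Cmod (Csub a b) / 2) ltac:(lra)). lra. }
  apply Cmod_eq0 in Z. replace a with (Cadd (Csub a b) b) by ring. rewrite Z. ring.
Qed.

Lemma Ccv_Cmod_ge u l L : Ccv u l -> (forall n, L <= Cmod (u n)) -> L <= Cmod l.
Proof.
  intros H HL. destruct (Rle_lt_dec L (Cmod l)) as [h|h]; auto.
  destruct (H (L - Cmod l) ltac:(lra)) as [N HN]. specialize (HN N (le_n _)).
  pose proof (Cmod_sub_ge (u N) l). specialize (HL N). lra.
Qed.

Lemma Ccv_Cmod_le u l W : Ccv u l -> (forall n, Cmod (u n) <= W) -> Cmod l <= W.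
Proof.
  intros H HW. replace l with (Csub l Czero) by ring.
  apply (Ccv_dist_le u l Czero W H). exists O. intros n _.
  replace (Csub (u n) Czero) with (u n) by ring. auto.
Qed.

Lemma Ccv_add u v a b :
  Ccv u a -> Ccv v b -> Ccv (fun n => Cadd (u n) (v n)) (Cadd a b).
Proof.
  intros Hu Hv e He.
  destruct (Hu (e / 2) ltac:(lra)) as [N1 H1]. destruct (Hv (e / 2) ltac:(lra)) as [N2 H2].
  exists (max N1 N2). intros n Hn.
  specialize (H1 n ltac:(lia)). specialize (H2 n ltac:(lia)).
  replace (Csub (Cadd (u n) (v n)) (Cadd a b)) with (Cadd (Csub (u n) a) (Csub (v n) b)) by ring.
  pose proof (Cmod_add_le (Csub (u n) a) (Csub (v n) b)). lra.
Qed.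

Lemma Ccv_mul u v a b :
  Ccv u a -> Ccv v b -> Ccv (fun n => Cmul (u n) (v n)) (Cmul a b).
Proof.
  intros Hu Hv e He.
  set (A := Cmod a + 1). set (B := Cmod b + 1).
  pose proof (Cmod_ge0 a). pose proof (Cmod_ge0 b).
  assert (eA : e / (2 * A) > 0) by (apply Rdiv_lt_0_compat; unfold A; lra).
  assert (eB : e / (2 * B) > 0) by (apply Rdiv_lt_0_compat; unfold B; lra).
  destruct (Hu _ eB) as [N1 H1]. destruct (Hv (Rmin 1 (e / (2 * A))) ltac:(apply Rmin_glb_lt; lra)) as [N2 H2].
  exists (max N1 N2). intros n Hn.
  specialize (H1 n ltac:(lia)). specialize (H2 n ltac:(lia)).
  pose proof (Rmin_l 1 (e / (2 * A))). pose proof (Rmin_r 1 (e / (2 * A))).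
  replace (Csub (Cmul (u n) (v n)) (Cmul a b))
    with (Cadd (Cmul (Csub (u n) a) (v n)) (Cmul a (Csub (v n) b))) by ring.
  eapply Rle_lt_trans. apply Cmod_add_le. rewrite !Cmod_mul.
  assert (Hvn : Cmod (v n) <= B).
  { pose proof (Cmod_add_le (Csub (v n) b) b).
    replace (Cadd (Csub (v n) b) b) with (v n) in H5 by ring. unfold B. lra. }
  assert (E1 : Cmod (Csub (u n) a) * Cmod (v n) <= e / 2).
  { replace (e / 2) with (e / (2 * B) * B) by (field; unfold B; lra).
    apply Rmult_le_compat; try apply Cmod_ge0; lra. }
  assert (E2 : Cmod a * Cmod (Csub (v n) b) < e / 2).
  { replace (e / 2) with (A * (e / (2 * A))) by (field; unfold A; lra).
    pose proof (Cmod_ge0 (Csub (v n) b)).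
    apply Rle_lt_trans with (Cmod a * (e / (2 * A))).
    - apply Rmult_le_compat_l; lra.
    - apply Rmult_lt_compat_r; [exact eA | unfold A; lra]. }
  lra.
Qed.

Lemma Ccv_inv v b : b <> Czero -> Ccv v b -> Ccv (fun n => Cinv (v n)) (Cinv b).
Proof.
  intros Hb Hv e He. pose proof (Cmod_gt0 _ Hb) as Hm.
  set (m := Cmod b) in *.
  assert (Hd : Rmin (m / 2) (e * m * m / 2) > 0).
  { apply Rmin_glb_lt; [lra|]. apply Rdiv_lt_0_compat; [|lra].
    repeat apply Rmult_lt_0_compat; lra. }
  destruct (Hv _ Hd) as [N HN]. exists N. intros n Hn. specialize (HN n Hn).
  pose proof (Rmin_l (m / 2) (e * m * m / 2)). pose proof (Rmin_r (m / 2) (e * m * m / 2)).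
  assert (Hvn : m / 2 <= Cmod (v n)).
  { pose proof (Cmod_sub_ge b (v n)). rewrite Cmod_sub_sym in H1. fold m in H1. lra. }
  assert (Hv0 : v n <> Czero) by (apply Cmod_gt0_neq0; lra).
  replace (Csub (Cinv (v n)) (Cinv b)) with (Cdiv (Csub b (v n)) (Cmul (v n) b)) by (field; auto).
  rewrite Cmod_div, Cmod_mul, Cmod_sub_sym by (apply Cmul_neq0; auto). fold m.
  apply Rlt_le_trans with ((e * m * m / 2) / (Cmod (v n) * m)).
  - unfold Rdiv. apply Rmult_lt_compat_r; [apply Rinv_0_lt_compat; nra | lra].
  - apply Rle_trans with ((e * m * m / 2) / (m / 2 * m)).
    + unfold Rdiv. apply Rmult_le_compat_l; [nra|]. apply Rinv_le_contravar; nra.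
    + right. field. lra.
Qed.

Lemma Ccv_div u v a b :
  b <> Czero -> Ccv u a -> Ccv v b -> Ccv (fun n => Cdiv (u n) (v n)) (Cdiv a b).
Proof. intros. apply Ccv_mul; auto. apply Ccv_inv; auto. Qed.

Lemma Ccv_scal c u a : Ccv u a -> Ccv (fun n => Cmul c (u n)) (Cmul c a).
Proof. intro. apply Ccv_mul; auto. apply Ccv_const. Qed.

Lemma Ccv_reindex_sub u l k : Ccv u l -> Ccv (fun N => u (N - k)%nat) l.
Proof.
  intros H e He. destruct (H e He) as [N HN].
  exists (N + k)%nat. intros n Hn. apply HN. lia.
Qed.

Lemma Ccv_reindex_add u l k : Ccv u l -> Ccv (fun N => u (N + k)%nat) l.
Proof.
  intros H e He. destruct (H e He) as [N HN].
  exists N. intros n Hn. apply HN. lia.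
Qed.

Lemma Ccv_cauchy u :
  (forall e, e > 0 -> exists N, forall m n, (m >= N)%nat -> (n >= N)%nat ->
     Cmod (Csub (u m) (u n)) < e) ->
  exists l, Ccv u l.
Proof.
  intros H.
  assert (CR : Cauchy_crit (fun n => Re (u n))).
  { intros e He. destruct (H e He) as [N HN]. exists N. intros m n Hm Hn. unfold R_dist.
    eapply Rle_lt_trans; [|apply (HN m n Hm Hn)]. apply (Re_le_Cmod (Csub (u m) (u n))). }
  assert (CI : Cauchy_crit (fun n => Im (u n))).
  { intros e He. destruct (H e He) as [N HN]. exists N. intros m n Hm Hn. unfold R_dist.
    eapply Rle_lt_trans; [|apply (HN m n Hm Hn)]. apply (Im_le_Cmod (Csub (u m) (u n))). }
  destruct (R_complete _ CR) as [a Ha]. destruct (R_complete _ CI) as [b Hb].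
  exists (mkC a b). intros e He.
  destruct (Ha (e / 2) ltac:(lra)) as [N1 H1]. destruct (Hb (e / 2) ltac:(lra)) as [N2 H2].
  exists (max N1 N2). intros n Hn.
  specialize (H1 n ltac:(lia)). specialize (H2 n ltac:(lia)). unfold R_dist in *.
  replace (Csub (u n) (mkC a b)) with (mkC (Re (u n) - a) (Im (u n) - b))
    by (apply Cplx_eq; simpl; ring).
  eapply Rle_lt_trans. apply Cmod_mkC_le. lra.
Qed.

Lemma Csum_S f n : Csum f (S n) = Cadd (Csum f n) (f n).
Proof. reflexivity. Qed.

Lemma Csum_ext_lt f g n : (forall k, (k < n)%nat -> f k = g k) -> Csum f n = Csum g n.
Proof. induction n; intros H; simpl. reflexivity. rewrite IHn, H; auto. Qed.

Lemma Csum_add f g n : Csum (fun k => Cadd (f k) (g k)) n = Cadd (Csum f n) (Csum g n).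
Proof. induction n; simpl. ring. rewrite IHn. ring. Qed.

Lemma Csum_sub f g n : Csum (fun k => Csub (f k) (g k)) n = Csub (Csum f n) (Csum g n).
Proof. induction n; simpl. ring. rewrite IHn. ring. Qed.

Lemma Csum_scal c f n : Csum (fun k => Cmul c (f k)) n = Cmul c (Csum f n).
Proof. induction n; simpl. ring. rewrite IHn. ring. Qed.

Lemma Csum_scal_r f c n : Csum (fun k => Cmul (f k) c) n = Cmul (Csum f n) c.
Proof. induction n; simpl. ring. rewrite IHn. ring. Qed.

Lemma Csum_shift f n : Csum f (S n) = Cadd (f O) (Csum (fun k => f (S k)) n).
Proof. induction n; simpl. ring. simpl in IHn. rewrite IHn. ring. Qed.

Lemma Csum_triangle_swap (g : nat -> nat -> Cplx) N :
  Csum (fun n => Csum (g n) (S n)) (S N) =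
  Csum (fun r => Csum (fun k => g (r + k)%nat r) (S (N - r))) (S N).
Proof.
  induction N as [|N IH]; [reflexivity|].
  rewrite Csum_S, IH.
  rewrite (Csum_S (fun r => Csum (fun k => g (r + k)%nat r) (S (S N - r))) (S N)), Nat.sub_diag.
  rewrite Csum_ext_lt with (f := fun r => Csum (fun k => g (r + k)%nat r) (S (S N - r)))
    (g := fun r => Cadd (Csum (fun k => g (r + k)%nat r) (S (N - r))) (g (S N) r)).
  - rewrite Csum_add, (Csum_S (g (S N)) (S N)). simpl (Csum _ 1). rewrite Nat.add_0_r. ring.
  - intros r Hr. replace (S N - r)%nat with (S (N - r)) by lia. rewrite Csum_S.
    replace (r + S (N - r))%nat with (S N) by lia. reflexivity.
Qed.

Lemma Ccv_Csum_fin (f : nat -> nat -> Cplx) g K :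
  (forall n, (n < K)%nat -> Ccv (fun N => f N n) (g n)) ->
  Ccv (fun N => Csum (f N) K) (Csum g K).
Proof.
  induction K; intros H; simpl.
  - apply Ccv_const.
  - apply Ccv_add; [apply IHK; intros|]; apply H; lia.
Qed.

(** * Series dominated by a geometric series *)

Lemma pow_decr r m n : 0 <= r <= 1 -> (m <= n)%nat -> r ^ n <= r ^ m.
Proof.
  intros Hr Hmn. replace n with (m + (n - m))%nat by lia. rewrite pow_add.
  pose proof (pow_le r m (proj1 Hr)). pose proof (pow_le r (n - m) (proj1 Hr)).
  pose proof (pow_incr r 1 (n - m) Hr). rewrite pow1 in H1. nra.
Qed.

Section GeometricDomination.
Variables (C r : R).
Hypothesis HC : 0 <= C.
Hypothesis Hr : 0 <= r < 1.

Lemma Csum_tail_le f n d :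
  (forall k, (n <= k < n + d)%nat -> Cmod (f k) <= C * r ^ k) ->
  Cmod (Csub (Csum f (n + d)) (Csum f n)) <= C * r ^ n / (1 - r).
Proof.
  intros H.
  enough (T : Cmod (Csub (Csum f (n + d)) (Csum f n)) <= C * (r ^ n - r ^ (n + d)) / (1 - r)).
  { eapply Rle_trans; [exact T|]. unfold Rdiv.
    apply Rmult_le_compat_r; [apply Rlt_le, Rinv_0_lt_compat; lra|].
    pose proof (pow_le r (n + d) (proj1 Hr)). nra. }
  induction d as [|d IH].
  - rewrite Nat.add_0_r. replace (Csub (Csum f n) (Csum f n)) with Czero by ring.
    rewrite Cmod_zero. right. field. lra.
  - rewrite Nat.add_succ_r, Csum_S.
    replace (Csub (Cadd (Csum f (n + d)) (f (n + d)%nat)) (Csum f n))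
      with (Cadd (Csub (Csum f (n + d)) (Csum f n)) (f (n + d)%nat)) by ring.
    eapply Rle_trans. apply Cmod_add_le.
    specialize (IH ltac:(intros; apply H; lia)). specialize (H (n + d)%nat ltac:(lia)).
    apply Rle_trans with (C * (r ^ n - r ^ (n + d)) / (1 - r) + C * r ^ (n + d)); [lra|].
    right. simpl. field. lra.
Qed.

Lemma geometric_tail_small e :
  e > 0 -> exists N, forall n, (n >= N)%nat -> C * r ^ n / (1 - r) < e.
Proof.
  intros He.
  assert (Hd : e * (1 - r) / (C + 1) > 0) by (apply Rdiv_lt_0_compat; nra).
  destruct (pow_lt_1_zero r ltac:(rewrite Rabs_right; lra) _ Hd) as [N HN].
  exists N. intros n Hn. specialize (HN n Hn).
  pose proof (pow_le r n (proj1 Hr)). rewrite Rabs_right in HN by lra.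
  apply Rmult_lt_compat_l with (r := C + 1) in HN; [|lra].
  replace ((C + 1) * (e * (1 - r) / (C + 1))) with (e * (1 - r)) in HN by (field; lra).
  apply Rmult_lt_reg_r with (1 - r); [lra|].
  replace (C * r ^ n / (1 - r) * (1 - r)) with (C * r ^ n) by (field; lra). nra.
Qed.

Lemma Cseries_geometric_dominated f :
  (forall k, Cmod (f k) <= C * r ^ k) -> exists l, Cseries f l.
Proof.
  intros H. apply Ccv_cauchy. intros e He.
  destruct (geometric_tail_small e He) as [N HN]. exists N.
  assert (T : forall m n, (n <= m)%nat -> (n >= N)%nat -> Cmod (Csub (Csum f m) (Csum f n)) < e).
  { intros m n Hnm Hn. replace m with (n + (m - n))%nat by lia.
    eapply Rle_lt_trans; [apply Csum_tail_le; intros; apply H | apply HN; lia]. }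
  intros m n Hm Hn. destruct (Nat.le_ge_cases n m).
  - apply T; lia.
  - rewrite Cmod_sub_sym. apply T; lia.
Qed.

Lemma Cseries_tail_le f G n :
  (forall k, Cmod (f k) <= C * r ^ k) -> Cseries f G ->
  Cmod (Csub G (Csum f n)) <= C * r ^ n / (1 - r).
Proof.
  intros H HG. apply (Ccv_dist_le (Csum f)); auto.
  exists n. intros m Hm. replace m with (n + (m - n))%nat by lia.
  apply Csum_tail_le. intros; apply H.
Qed.

Lemma Ccv_tannery (f : nat -> nat -> Cplx) g G :
  (forall N n, (n <= N)%nat -> Cmod (f N n) <= C * r ^ n) ->
  (forall n, Cmod (g n) <= C * r ^ n) ->
  (forall n, Ccv (fun N => f N n) (g n)) ->
  Cseries g G ->
  Ccv (fun N => Csum (f N) (S N)) G.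
Proof.
  intros Hf Hg Hcv HG e He.
  destruct (geometric_tail_small (e / 4) ltac:(lra)) as [K HK]. specialize (HK K (le_n _)).
  destruct (Ccv_Csum_fin f g K (fun n _ => Hcv n) (e / 4) ltac:(lra)) as [N1 HN1].
  exists (max N1 K). intros N HN. specialize (HN1 N ltac:(lia)).
  assert (T1 : Cmod (Csub (Csum (f N) (S N)) (Csum (f N) K)) <= C * r ^ K / (1 - r)).
  { replace (S N) with (K + (S N - K))%nat by lia.
    apply Csum_tail_le. intros k Hk. apply Hf. lia. }
  pose proof (Cseries_tail_le g G K Hg HG) as T2.
  replace (Csub (Csum (f N) (S N)) G) with
    (Cadd (Cadd (Csub (Csum (f N) (S N)) (Csum (f N) K)) (Csub (Csum (f N) K) (Csum g K)))
          (Copp (Csub G (Csum g K)))) by ring.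
  eapply Rle_lt_trans. apply Cmod_add_le. rewrite Cmod_opp.
  pose proof (Cmod_add_le (Csub (Csum (f N) (S N)) (Csum (f N) K)) (Csub (Csum (f N) K) (Csum g K))).
  lra.
Qed.

Lemma Ccv_geometric_increments u :
  (forall k, Cmod (Csub (u (S k)) (u k)) <= C * r ^ k) -> exists l, Ccv u l.
Proof.
  intros H. destruct (Cseries_geometric_dominated _ H) as [l Hl].
  exists (Cadd (u O) l).
  assert (E : forall n, Cadd (u O) (Csum (fun k => Csub (u (S k)) (u k)) n) = u n).
  { induction n; simpl. ring. rewrite <- IHn. ring. }
  apply (Ccv_ext _ _ _ E). apply Ccv_add; [apply Ccv_const | exact Hl].
Qed.

End GeometricDomination.

Lemma Ccv_weighted_series (w : nat -> nat -> Cplx) wl c l K W r :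
  0 <= K -> 0 <= W -> 0 <= r < 1 ->
  (forall N n, (n <= N)%nat -> Cmod (w N n) <= W) ->
  (forall n, Ccv (fun N => w N n) wl) ->
  (forall n, Cmod (c n) <= K * r ^ n) ->
  Cseries c l ->
  Ccv (fun N => Csum (fun n => Cmul (w N n) (c n)) (S N)) (Cmul wl l).
Proof.
  intros HK HW Hr Hw Hwl Hc Hl.
  assert (Hwl_le : Cmod wl <= W).
  { apply (Ccv_Cmod_le _ _ W (Hwl O)). intro N. apply Hw. lia. }
  assert (Hbound : forall x, Cmod x <= W -> forall n, Cmod (Cmul x (c n)) <= W * K * r ^ n).
  { intros x Hx n. rewrite Cmod_mul, Rmult_assoc.
    apply Rmult_le_compat; auto using Cmod_ge0. }
  apply (Ccv_tannery (W * K) r (Rmult_le_pos _ _ HW HK) Hr _ (fun n => Cmul wl (c n))).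
  - intros N n Hn. apply Hbound, Hw. exact Hn.
  - apply Hbound, Hwl_le.
  - intros n. apply Ccv_mul; [apply Hwl | apply Ccv_const].
  - unfold Cseries. apply (Ccv_ext (fun N => Cmul wl (Csum c N))).
    + intros N. symmetry. apply Csum_scal.
    + apply Ccv_scal. exact Hl.
Qed.

(** * Bounds for q-Pochhammer symbols *)

Lemma exp_le_compat x y : x <= y -> exp x <= exp y.
Proof. intros [H|H]; [left; apply exp_increasing; exact H | right; subst; reflexivity]. Qed.

Lemma exp_neg_le_inv y : 0 <= y -> exp (- y) <= / (1 + y).
Proof. intro Hy. rewrite exp_Ropp. apply Rinv_le_contravar; [lra | apply exp_ineq1_le]. Qed.

Lemma exp_neg_le_one_sub x r : 0 <= x <= r -> r < 1 -> exp (- (x / (1 - r))) <= 1 - x.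
Proof.
  intros Hx Hr.
  assert (Hy : 0 <= x / (1 - r)) by (apply Rmult_le_pos; [lra | left; apply Rinv_0_lt_compat; lra]).
  eapply Rle_trans; [apply exp_neg_le_inv; exact Hy|].
  replace (/ (1 + x / (1 - r))) with ((1 - r) / (1 - r + x)) by (field; lra).
  apply Rmult_le_reg_r with (1 - r + x); [lra|].
  unfold Rdiv. rewrite Rmult_assoc, Rinv_l by lra. nra.
Qed.

Lemma Cpow_S q n : Cpow q (S n) = Cmul q (Cpow q n).
Proof. reflexivity. Qed.

Lemma qpoch_S a q n : qpoch a q (S n) = Cmul (qpoch a q n) (Csub Cone (Cmul a (Cpow q n))).
Proof. reflexivity. Qed.

Section PochhammerBounds.
Variables a q : Cplx.
Hypothesis hq : Cmod q < 1.
Hypothesis ha : Cmod a <= Cmod q.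
Local Notation r := (Cmod q).

Definition qpoch_lb := exp (- (r / ((1 - r) * (1 - r)))).
Definition qpoch_ub := exp (r / (1 - r)).

Lemma Cmod_mul_Cpow_le j : Cmod (Cmul a (Cpow q j)) <= r ^ S j.
Proof.
  rewrite Cmod_mul, Cmod_pow. simpl.
  apply Rmult_le_compat_r; [apply pow_le, Cmod_ge0 | exact ha].
Qed.

Lemma qpoch_Cmod_ge n : qpoch_lb <= Cmod (qpoch a q n).
Proof.
  pose proof (Cmod_ge0 q) as Hr0.
  assert (Hd : 0 < (1 - r) * (1 - r)) by nra.
  enough (H : exp (- ((r - r ^ S n) / ((1 - r) * (1 - r)))) <= Cmod (qpoch a q n)).
  { eapply Rle_trans; [|exact H]. apply exp_le_compat, Ropp_le_contravar.
    unfold Rdiv. apply Rmult_le_compat_r; [left; apply Rinv_0_lt_compat; lra|].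
    pose proof (pow_le r (S n) Hr0). lra. }
  induction n as [|n IH].
  - unfold qpoch; simpl. rewrite Cmod_one. replace (r - r * 1) with 0 by ring.
    unfold Rdiv. rewrite Rmult_0_l, Ropp_0, exp_0. lra.
  - rewrite qpoch_S, Cmod_mul.
    assert (Hf : 1 - r ^ S n <= Cmod (Csub Cone (Cmul a (Cpow q n)))).
    { pose proof (Cmod_sub_ge Cone (Cmul a (Cpow q n))). pose proof (Cmod_mul_Cpow_le n).
      rewrite Cmod_one in H. lra. }
    assert (Hx : 0 <= r ^ S n <= r).
    { split; [apply pow_le; lra|]. simpl.
      pose proof (pow_incr r 1 n ltac:(lra)). rewrite pow1 in H. nra. }
    pose proof (exp_neg_le_one_sub (r ^ S n) r Hx hq).
    apply Rle_trans with (exp (- ((r - r ^ S n) / ((1 - r) * (1 - r)))) * exp (- (r ^ S n / (1 - r)))).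
    + rewrite <- exp_plus. right. f_equal. simpl. field. lra.
    + apply Rmult_le_compat; try (left; apply exp_pos); lra.
Qed.

Lemma qpoch_Cmod_le n : Cmod (qpoch a q n) <= qpoch_ub.
Proof.
  pose proof (Cmod_ge0 q) as Hr0.
  enough (H : Cmod (qpoch a q n) <= exp ((r - r ^ S n) / (1 - r))).
  { eapply Rle_trans; [exact H|]. apply exp_le_compat.
    unfold Rdiv. apply Rmult_le_compat_r; [left; apply Rinv_0_lt_compat; lra|].
    pose proof (pow_le r (S n) Hr0). lra. }
  induction n as [|n IH].
  - unfold qpoch; simpl. rewrite Cmod_one. replace (r - r * 1) with 0 by ring.
    unfold Rdiv. rewrite Rmult_0_l, exp_0. lra.
  - rewrite qpoch_S, Cmod_mul.
    assert (Hf : Cmod (Csub Cone (Cmul a (Cpow q n))) <= 1 + r ^ S n).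
    { pose proof (Cmod_sub_le Cone (Cmul a (Cpow q n))). pose proof (Cmod_mul_Cpow_le n).
      rewrite Cmod_one in H. lra. }
    pose proof (exp_ineq1_le (r ^ S n)).
    apply Rle_trans with (exp ((r - r ^ S n) / (1 - r)) * exp (r ^ S n)).
    + apply Rmult_le_compat; try apply Cmod_ge0; lra.
    + rewrite <- exp_plus. right. f_equal. simpl. field. lra.
Qed.

Lemma qpoch_lb_pos : 0 < qpoch_lb.
Proof. apply exp_pos. Qed.

Lemma qpoch_neq0 n : qpoch a q n <> Czero.
Proof. apply Cmod_gt0_neq0. eapply Rlt_le_trans; [apply qpoch_lb_pos | apply qpoch_Cmod_ge]. Qed.

Lemma qpoch_inf_exists : exists P, qpoch_inf a q P /\ qpoch_lb <= Cmod P.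
Proof.
  pose proof (Cmod_ge0 q) as Hr0.
  destruct (Ccv_geometric_increments qpoch_ub r (Rlt_le _ _ (exp_pos _)) (conj Hr0 hq) (qpoch a q))
    as [P HP].
  - intro k. rewrite qpoch_S.
    replace (Csub (Cmul (qpoch a q k) (Csub Cone (Cmul a (Cpow q k)))) (qpoch a q k))
      with (Copp (Cmul (qpoch a q k) (Cmul a (Cpow q k)))) by ring.
    rewrite Cmod_opp, Cmod_mul.
    pose proof (qpoch_Cmod_le k). pose proof (Cmod_mul_Cpow_le k).
    pose proof (pow_le r k Hr0). simpl in H0.
    apply Rmult_le_compat; try apply Cmod_ge0; nra.
  - exists P. split; [exact HP|]. apply (Ccv_Cmod_ge _ _ _ HP qpoch_Cmod_ge).
Qed.

End PochhammerBounds.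

(** * Finite identities *)

Lemma Cpow_add q a b : Cpow q (a + b) = Cmul (Cpow q a) (Cpow q b).
Proof. induction a; simpl. ring. rewrite IHa. ring. Qed.

Lemma Cpow_0 q : Cpow q 0 = Cone.
Proof. reflexivity. Qed.

Lemma Cpow_double q k : Cpow q (2 * k) = Cmul (Cpow q k) (Cpow q k).
Proof. replace (2 * k)%nat with (k + k)%nat by lia. apply Cpow_add. Qed.

Lemma Csign_S k : Csign (S k) = Cmul (Copp Cone) (Csign k).
Proof. reflexivity. Qed.

Fixpoint tri (n : nat) : nat := match n with O => O | S m => (tri m + S m)%nat end.

Lemma tri_double n : (2 * tri n = n * (n + 1))%nat.
Proof. induction n; simpl tri; lia. Qed.

Lemma tri_ge n : (n <= tri n)%nat.
Proof. induction n; simpl; lia. Qed.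

Ltac Cpow_expand := repeat rewrite ?Cpow_double, ?Cpow_add, ?Cpow_S, ?Cpow_0.
Ltac Cpow_expand_in H := repeat rewrite ?Cpow_double, ?Cpow_add, ?Cpow_S, ?Cpow_0 in H.

(* Discharges a side condition [X <> Czero] of [field] using a hypothesis [Y <> Czero]
   with [X] and [Y] equal as polynomials. *)
Ltac neq0_from_hyps :=
  match goal with |- ?X <> Czero =>
    let Z := fresh "Z" in intro Z;
    try change (mkC R1 R0) with Cone in Z; try change (mkC R0 R0) with Czero in Z;
    match goal with H : ?Y <> Czero |- _ => apply H; rewrite <- Z; ring end
  end.

Ltac Cfield :=
  field; repeat split; try assumption; try neq0_from_hyps;
  try (let Z := fresh in intro Z; injection Z; intros; lra).

Section FiniteIdentities.
Variable q : Cplx.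
Hypothesis hq : Cmod q < 1.
Local Notation p := (qpoch q q).
Local Notation pm := (qpoch (Copp q) q).

Lemma Cmod_Cpow_le n k : (k <= n)%nat -> Cmod (Cpow q n) <= Cmod q ^ k.
Proof. intros. rewrite Cmod_pow. apply pow_decr; auto. pose proof (Cmod_ge0 q). lra. Qed.

Lemma one_sub_Cpow_neq0 k : (k >= 1)%nat -> Csub Cone (Cpow q k) <> Czero.
Proof.
  intros Hk. apply Cmod_gt0_neq0.
  pose proof (Cmod_sub_ge Cone (Cpow q k)). pose proof (Cmod_Cpow_le k 1 Hk).
  rewrite Cmod_one in H. rewrite pow_1 in H0. lra.
Qed.

Lemma Cmod_one_add_Cpow_ge k : 1 - Cmod q <= Cmod (Cadd Cone (Cpow q k)).
Proof.
  destruct k as [|k].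
  - change (Cadd Cone (Cpow q 0)) with (Cadd Cone Cone). rewrite Cmod_two.
    pose proof (Cmod_ge0 q). lra.
  - pose proof (Cmod_add_ge Cone (Cpow q (S k))). pose proof (Cmod_Cpow_le (S k) 1 ltac:(lia)).
    rewrite Cmod_one in H. rewrite pow_1 in H0. lra.
Qed.

Lemma one_add_Cpow_neq0 k : Cadd Cone (Cpow q k) <> Czero.
Proof. apply Cmod_gt0_neq0. pose proof (Cmod_one_add_Cpow_ge k). lra. Qed.

Lemma p_neq0 n : p n <> Czero.
Proof. apply qpoch_neq0; [exact hq | apply Rle_refl]. Qed.

Lemma pm_neq0 n : pm n <> Czero.
Proof. apply qpoch_neq0; [exact hq | rewrite Cmod_opp; apply Rle_refl]. Qed.

Lemma p_S n : p (S n) = Cmul (p n) (Csub Cone (Cpow q (S n))).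
Proof. rewrite qpoch_S. reflexivity. Qed.

Definition bailey_pair (alpha beta : nat -> Cplx) : Prop :=
  forall n, beta n = Csum (fun r => Cdiv (alpha r) (Cmul (p (n - r)) (p (n + r + 1)))) (S n).

Definition alpha r :=
  Cdiv (Cmul (Cmul (Cadd Cone Cone) (Csign r)) (Cmul (Cpow q (tri r)) (Csub Cone (Cpow q (2 * r + 1)))))
       (Cmul (Cadd Cone (Cpow q r)) (Cadd Cone (Cpow q (S r)))).

Definition beta n := Cinv (Cmul (pm n) (pm (S n))).

(* By [bailey_term_step], [2 * defect m r] is what the r-th term of the Bailey sum contributes to the
   failure of the recurrence [beta (m-1) = beta m (1 + q^m) (1 + q^(m+1))]; these contributions
   telescope ([Csum_defect]). *)
Definition defect m k :=
  Cdiv (Cmul (Cmul (Csign k) (Cpow q (tri k))) (Cmul (Cpow q (m - k)) (Csub Cone (Cpow q (2 * k + 1)))))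
       (Cmul (p (m - k)) (p (m + k + 1))).

Definition defect_psum m j :=
  Cdiv (Cmul (Cmul (Csign j) (Cmul (Cpow q m) (Cpow q (tri j))))
             (Cmul (Csub Cone (Cpow q (S j))) (Csub Cone (Cpow q (m - j)))))
       (Cmul (Csub Cone (Cpow q m)) (Cmul (p (m - j)) (p (m + j + 1)))).

Lemma Csum_defect m j : (m >= 1)%nat -> (j <= m)%nat -> Csum (defect m) (S j) = defect_psum m j.
Proof.
  intros Hm. induction j as [|j IH]; intros Hj.
  - simpl Csum. unfold defect, defect_psum. rewrite !Nat.sub_0_r. simpl tri.
    pose proof (one_sub_Cpow_neq0 m Hm). pose proof (p_neq0 m). pose proof (p_neq0 (m + 0 + 1)).
    Cpow_expand. field. auto.
  - rewrite Csum_S, IH by lia. unfold defect, defect_psum.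
    destruct (Nat.le_exists_sub (S j) m Hj) as [d [Hd _]]. subst m.
    replace (d + S j - j)%nat with (S d) by lia.
    replace (d + S j - S j)%nat with d by lia.
    replace (d + S j + j + 1)%nat with (S (d + j + j + 1)) by lia.
    replace (d + S j + S j + 1)%nat with (S (S (d + j + j + 1))) by lia.
    rewrite !qpoch_S.
    pose proof (one_sub_Cpow_neq0 (d + S j) ltac:(lia)) as N1.
    pose proof (p_neq0 d) as N2. pose proof (p_neq0 (d + j + j + 1)) as N3.
    pose proof (one_sub_Cpow_neq0 (S d) ltac:(lia)) as N4.
    pose proof (one_sub_Cpow_neq0 (S (S (d + j + j + 1))) ltac:(lia)) as N5.
    pose proof (one_sub_Cpow_neq0 (S (d + j + j + 1)) ltac:(lia)) as N6.
    simpl tri. rewrite !Csign_S.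
    Cpow_expand. Cpow_expand_in N1. Cpow_expand_in N4. Cpow_expand_in N5. Cpow_expand_in N6.
    Cfield.
Qed.

Lemma Csum_defect_full m : (m >= 1)%nat -> Csum (defect m) (S m) = Czero.
Proof.
  intros Hm. rewrite Csum_defect by auto. unfold defect_psum.
  rewrite Nat.sub_diag. change (Cpow q 0) with Cone. unfold Cdiv. ring.
Qed.

Lemma bailey_term_step m r : (r <= m)%nat ->
  Csub (Cmul (Cdiv (alpha r) (Cmul (p (m - r)) (p (m + r + 1))))
             (Cmul (Cadd Cone (Cpow q m)) (Cadd Cone (Cpow q (S m)))))
       (Cdiv (Cmul (alpha r) (Cmul (Csub Cone (Cpow q (m - r))) (Csub Cone (Cpow q (m + r + 1)))))
             (Cmul (p (m - r)) (p (m + r + 1))))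
  = Cmul (Cadd Cone Cone) (defect m r).
Proof.
  intros Hr. destruct (Nat.le_exists_sub r m Hr) as [e [He _]]. subst m.
  unfold alpha, defect. replace (e + r - r)%nat with e by lia.
  pose proof (p_neq0 e) as N1. pose proof (p_neq0 (e + r + r + 1)) as N2.
  pose proof (one_add_Cpow_neq0 r) as N3. pose proof (one_add_Cpow_neq0 (S r)) as N4.
  Cpow_expand. Cpow_expand_in N3. Cpow_expand_in N4. Cfield.
Qed.

Lemma bailey_pair_alpha_beta : bailey_pair alpha beta.
Proof.
  set (T := fun n r => Cdiv (alpha r) (Cmul (p (n - r)) (p (n + r + 1)))).
  intro n. change (beta n = Csum (T n) (S n)).
  induction n as [|n IH].
  - unfold T, beta, alpha. simpl Csum. simpl tri. simpl Nat.sub. simpl Nat.add.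
    rewrite !qpoch_S. change (qpoch (Copp q) q 0) with Cone. change (qpoch q q 0) with Cone.
    change (Csign 0) with Cone. change (Cpow q 0) with Cone.
    pose proof (one_sub_Cpow_neq0 1 ltac:(lia)) as N1. pose proof (one_add_Cpow_neq0 1) as N2.
    Cpow_expand. Cpow_expand_in N1. Cpow_expand_in N2. Cfield.
  - set (X := Cmul (Cadd Cone (Cpow q (S n))) (Cadd Cone (Cpow q (S (S n))))).
    set (W := fun r => Cdiv (Cmul (alpha r) (Cmul (Csub Cone (Cpow q (S n - r))) (Csub Cone (Cpow q (S n + r + 1)))))
                            (Cmul (p (S n - r)) (p (S n + r + 1)))).
    assert (E1 : Csum (T n) (S n) = Csum W (S (S n))).
    { rewrite (Csum_S W (S n)). replace (W (S n)) with Czero.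
      2:{ unfold W. rewrite Nat.sub_diag. change (Cpow q 0) with Cone. unfold Cdiv. ring. }
      rewrite Csum_ext_lt with (g := W). ring.
      intros r Hr. unfold W, T. replace (S n - r)%nat with (S (n - r)) by lia.
      replace (S n + r + 1)%nat with (S (n + r + 1)) by lia.
      rewrite !p_S. pose proof (p_neq0 (n - r)). pose proof (p_neq0 (n + r + 1)).
      pose proof (one_sub_Cpow_neq0 (S (n - r)) ltac:(lia)).
      pose proof (one_sub_Cpow_neq0 (S (n + r + 1)) ltac:(lia)).
      Cfield. }
    assert (E2 : Cmul (Csum (T (S n)) (S (S n))) X = beta n).
    { rewrite IH, E1, <- Csum_scal_r.
      enough (D : Csub (Csum (fun r => Cmul (T (S n) r) X) (S (S n))) (Csum W (S (S n))) = Czero).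
      { replace (Csum (fun r => Cmul (T (S n) r) X) (S (S n)))
          with (Cadd (Csub (Csum (fun r => Cmul (T (S n) r) X) (S (S n))) (Csum W (S (S n))))
                     (Csum W (S (S n)))) by ring.
        rewrite D. ring. }
      rewrite <- Csum_sub.
      rewrite Csum_ext_lt with (g := fun r => Cmul (Cadd Cone Cone) (defect (S n) r)).
      - rewrite Csum_scal, Csum_defect_full by lia. ring.
      - intros r Hr. apply bailey_term_step. lia. }
    pose proof (one_add_Cpow_neq0 (S n)) as N1. pose proof (one_add_Cpow_neq0 (S (S n))) as N2.
    pose proof (pm_neq0 n) as N3.
    assert (HX : X <> Czero) by (apply Cmul_neq0; auto).
    replace (Csum (T (S n)) (S (S n))) with (Cdiv (beta n) X) by (rewrite <- E2; field; auto).
    unfold beta, X. rewrite !qpoch_S.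
    Cpow_expand. Cpow_expand_in N1. Cpow_expand_in N2. Cfield.
Qed.

Definition cauchy_term M s k :=
  Cdiv (Cpow q (k * k + s * k)) (Cmul (p (M - k)) (Cmul (p k) (p (s + k)))).

(* Finite form of [sum_k q^(k^2+sk) / ((q;q)_k (q;q)_(s+k)) = 1 / (q;q)_oo], proved by induction on [M]
   after splitting [1 - q^(M+1) = (1 - q^(M+1-k)) + q^(M+1-k) (1 - q^k)] in each term. *)
Lemma qcauchy_finite M : forall s, Csum (cauchy_term M s) (S M) = Cinv (Cmul (p M) (p (s + M))).
Proof.
  induction M as [|M IH]; intros s.
  - unfold cauchy_term. simpl Csum. simpl Nat.sub. rewrite Nat.mul_0_r, Nat.add_0_r, Cpow_0.
    change (qpoch q q 0) with Cone. pose proof (p_neq0 s). Cfield.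
  - assert (HM : Cmul (Csub Cone (Cpow q (S M))) (Csum (cauchy_term (S M) s) (S (S M))) =
                 Cadd (Csum (cauchy_term M s) (S M))
                      (Cmul (Cpow q (S M + s)) (Csum (cauchy_term M (S s)) (S M)))).
    { rewrite <- !Csum_scal.
      set (A := fun k => Cdiv (Cmul (Cpow q (k * k + s * k)) (Csub Cone (Cpow q (S M - k))))
                              (Cmul (p (S M - k)) (Cmul (p k) (p (s + k))))).
      set (B := fun k => Cdiv (Cmul (Cpow q (k * k + s * k)) (Cmul (Cpow q (S M - k)) (Csub Cone (Cpow q k))))
                              (Cmul (p (S M - k)) (Cmul (p k) (p (s + k))))).
      rewrite Csum_ext_lt with (g := fun k => Cadd (A k) (B k)).
      2:{ intros k Hk. unfold A, B, cauchy_term.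
          replace (Cpow q (S M)) with (Cmul (Cpow q (S M - k)) (Cpow q k))
            by (rewrite <- Cpow_add; f_equal; lia).
          pose proof (p_neq0 (S M - k)). pose proof (p_neq0 k). pose proof (p_neq0 (s + k)).
          Cfield. }
      rewrite Csum_add. f_equal.
      - rewrite Csum_S. replace (A (S M)) with Czero.
        2:{ unfold A. rewrite Nat.sub_diag, Cpow_0. unfold Cdiv. ring. }
        rewrite Csum_ext_lt with (g := cauchy_term M s). ring.
        intros k Hk. unfold A, cauchy_term. replace (S M - k)%nat with (S (M - k)) by lia. rewrite p_S.
        pose proof (p_neq0 (M - k)). pose proof (p_neq0 k). pose proof (p_neq0 (s + k)).
        pose proof (one_sub_Cpow_neq0 (S (M - k)) ltac:(lia)). Cfield.
      - rewrite Csum_shift. replace (B O) with Czero.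
        2:{ unfold B. rewrite Cpow_0. unfold Cdiv. ring. }
        rewrite Csum_ext_lt with (g := fun k => Cmul (Cpow q (S M + s)) (cauchy_term M (S s) k)). ring.
        intros k Hk. unfold B, cauchy_term. destruct (Nat.le_exists_sub k M ltac:(lia)) as [e [He _]].
        subst M.
        replace (S (e + k) - S k)%nat with e by lia. replace (e + k - k)%nat with e by lia.
        replace (s + S k)%nat with (S s + k)%nat by lia.
        replace (S k * S k + s * S k)%nat with (k * k + S s * k + (S k + s))%nat by ring.
        replace (S (e + k) + s)%nat with (e + (S k + s))%nat by lia.
        rewrite p_S.
        pose proof (p_neq0 e). pose proof (p_neq0 k). pose proof (p_neq0 (S s + k)).
        pose proof (one_sub_Cpow_neq0 (S k) ltac:(lia)) as N.
        Cpow_expand. Cpow_expand_in N. Cfield. }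
    rewrite !IH in HM.
    pose proof (one_sub_Cpow_neq0 (S M) ltac:(lia)) as N1.
    pose proof (p_neq0 M). pose proof (p_neq0 (s + M)). pose proof (p_neq0 (S s + M)).
    replace (Csum (cauchy_term (S M) s) (S (S M))) with
      (Cdiv (Cmul (Csub Cone (Cpow q (S M))) (Csum (cauchy_term (S M) s) (S (S M))))
            (Csub Cone (Cpow q (S M)))) by (field; auto).
    rewrite HM. replace (s + S M)%nat with (S (s + M)) by lia.
    replace (S s + M)%nat with (S (s + M)) by lia. rewrite !p_S.
    pose proof (one_sub_Cpow_neq0 (S (s + M)) ltac:(lia)) as N2.
    replace (S M + s)%nat with (S (s + M)) by lia.
    Cpow_expand. Cpow_expand_in N1. Cpow_expand_in N2. Cfield.
Qed.

Lemma bailey_lemma_finite a b N : bailey_pair a b ->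
  Csum (fun n => Cdiv (Cmul (Cpow q (n * n + n)) (b n)) (p (N - n))) (S N) =
  Csum (fun r => Cdiv (Cmul (Cpow q (r * r + r)) (a r)) (Cmul (p (N - r)) (p (N + r + 1)))) (S N).
Proof.
  intros Hab.
  set (T := fun n r => Cmul (Cdiv (Cpow q (n * n + n)) (p (N - n)))
                            (Cdiv (a r) (Cmul (p (n - r)) (p (n + r + 1))))).
  rewrite Csum_ext_lt with (g := fun n => Csum (T n) (S n)).
  2:{ intros n Hn. unfold T. rewrite Hab, Csum_scal. unfold Cdiv. ring. }
  rewrite Csum_triangle_swap. apply Csum_ext_lt. intros r Hr.
  rewrite Csum_ext_lt with
    (g := fun k => Cmul (Cmul (a r) (Cpow q (r * r + r))) (cauchy_term (N - r) (2 * r + 1) k)).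
  2:{ intros k Hk. unfold T, cauchy_term. replace (r + k - r)%nat with k by lia.
      replace (N - (r + k))%nat with (N - r - k)%nat by lia.
      replace ((r + k) * (r + k) + (r + k))%nat with ((r * r + r) + (k * k + (2 * r + 1) * k))%nat by ring.
      replace (r + k + r + 1)%nat with (2 * r + 1 + k)%nat by lia.
      pose proof (p_neq0 (N - r - k)). pose proof (p_neq0 k). pose proof (p_neq0 (2 * r + 1 + k)).
      rewrite Cpow_add. Cfield. }
  rewrite Csum_scal, qcauchy_finite.
  replace (2 * r + 1 + (N - r))%nat with (N + r + 1)%nat by lia.
  pose proof (p_neq0 (N - r)). pose proof (p_neq0 (N + r + 1)). Cfield.
Qed.

End FiniteIdentities.

(** * The limit [N -> oo] *)

Lemma three_tri n : (3 * n * (n + 1) / 2 = 3 * tri n)%nat.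
Proof.
  replace (3 * n * (n + 1))%nat with (3 * tri n * 2)%nat by (pose proof (tri_double n); lia).
  apply Nat.div_mul. lia.
Qed.

Lemma three_tri_pred m : (3 * S m * (S m - 1) / 2 + S m = 3 * tri m + S m)%nat.
Proof.
  replace (S m - 1)%nat with m by lia.
  replace (3 * S m * m)%nat with (3 * tri m * 2)%nat by (pose proof (tri_double m); lia).
  rewrite Nat.div_mul; lia.
Qed.

Lemma bilat_term_nonneg q n :
  bilat_term q (Z.of_nat n) = Cdiv (Cmul (Csign n) (Cpow q (3 * tri n))) (Cadd Cone (Cpow q n)).
Proof.
  destruct n as [|n].
  - simpl. change (Csign 0) with Cone. unfold Cdiv. ring.
  - simpl Z.of_nat. unfold bilat_term. rewrite SuccNat2Pos.id_succ, three_tri. reflexivity.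
Qed.

Lemma bilat_term_neg q m :
  bilat_term q (- Z.of_nat (S m))%Z =
  Cdiv (Cmul (Csign (S m)) (Cpow q (3 * tri m + S m))) (Cadd Cone (Cpow q (S m))).
Proof.
  simpl Z.of_nat. simpl Z.opp. unfold bilat_term.
  rewrite SuccNat2Pos.id_succ, three_tri_pred. reflexivity.
Qed.

Section Limit.
Variable q : Cplx.
Hypothesis hq : Cmod q < 1.
Local Notation r := (Cmod q).
Local Notation p := (qpoch q q).
Local Notation pm := (qpoch (Copp q) q).

Definition lhs_term n :=
  Cdiv (Cpow q (n * n + n)) (Cmul (Cmul (pm n) (pm n)) (Cadd Cone (Cpow q (S n)))).

Definition rhs_term n :=
  Cdiv (Cmul (Cmul (Csign n) (Cpow q (3 * n * (n + 1) / 2))) (Csub Cone (Cpow q (2 * n + 1))))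
       (Cmul (Cadd Cone (Cpow q n)) (Cadd Cone (Cpow q (S n)))).

Lemma lhs_term_eq n : lhs_term n = Cmul (Cpow q (n * n + n)) (beta q n).
Proof.
  unfold lhs_term, beta. rewrite qpoch_S.
  pose proof (pm_neq0 q hq n). pose proof (one_add_Cpow_neq0 q hq (S n)) as N.
  Cpow_expand_in N. rewrite Cpow_S. Cfield.
Qed.

Lemma rhs_term_eq n : Cmul (Cpow q (n * n + n)) (alpha q n) = Cmul (Cadd Cone Cone) (rhs_term n).
Proof.
  unfold alpha, rhs_term.
  replace (3 * n * (n + 1) / 2)%nat with (n * n + n + tri n)%nat
    by (rewrite three_tri; pose proof (tri_double n); lia).
  pose proof (one_add_Cpow_neq0 q hq n). pose proof (one_add_Cpow_neq0 q hq (S n)).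
  rewrite (Cpow_add q (n * n + n) (tri n)). Cfield.
Qed.

Lemma rhs_term_split n :
  rhs_term n = Cadd (bilat_term q (Z.of_nat n)) (bilat_term q (- Z.of_nat (S n))%Z).
Proof.
  unfold rhs_term. rewrite bilat_term_nonneg, bilat_term_neg, three_tri, Csign_S.
  pose proof (one_add_Cpow_neq0 q hq n). pose proof (one_add_Cpow_neq0 q hq (S n)) as N.
  Cpow_expand. Cpow_expand_in N. Cfield.
Qed.

Lemma Cmod_lhs_term_le n : Cmod (lhs_term n) <= / (qpoch_lb q * qpoch_lb q) * r ^ n.
Proof.
  pose proof (qpoch_lb_pos q) as HL.
  rewrite lhs_term_eq, Cmod_mul, Rmult_comm. unfold beta.
  apply Rmult_le_compat; auto using Cmod_ge0.
  - apply Cmod_inv_le; [nra|]. rewrite Cmod_mul.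
    assert (Hm : Cmod (Copp q) <= r) by (rewrite Cmod_opp; lra).
    apply Rmult_le_compat; try lra; apply qpoch_Cmod_ge; auto.
  - apply (Cmod_Cpow_le q hq). lia.
Qed.

Lemma Cmod_signed_frac_le n e k : (k <= e)%nat ->
  Cmod (Cdiv (Cmul (Csign n) (Cpow q e)) (Cadd Cone (Cpow q n))) <= / (1 - r) * r ^ k.
Proof.
  intros Hk. rewrite Cmod_div by (apply one_add_Cpow_neq0; auto).
  rewrite Cmod_mul, Cmod_Csign, Rmult_1_l.
  pose proof (Cmod_Cpow_le q hq e k Hk). pose proof (Cmod_one_add_Cpow_ge q hq n).
  pose proof (Cmod_ge0 (Cpow q e)). pose proof (Cmod_ge0 q).
  unfold Rdiv. rewrite Rmult_comm.
  apply Rmult_le_compat; auto.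
  - left. apply Rinv_0_lt_compat. lra.
  - apply Rinv_le_contravar; lra.
Qed.

Lemma Cmod_bilat_term_nonneg_le n : Cmod (bilat_term q (Z.of_nat n)) <= / (1 - r) * r ^ n.
Proof. rewrite bilat_term_nonneg. apply Cmod_signed_frac_le. pose proof (tri_ge n). lia. Qed.

Lemma Cmod_bilat_term_neg_le n : Cmod (bilat_term q (- Z.of_nat (S n))%Z) <= / (1 - r) * r ^ n.
Proof. rewrite bilat_term_neg. apply Cmod_signed_frac_le. lia. Qed.

Lemma Cmod_rhs_term_le n : Cmod (rhs_term n) <= 2 / (1 - r) * r ^ n.
Proof.
  rewrite rhs_term_split. eapply Rle_trans; [apply Cmod_add_le|].
  pose proof (Cmod_bilat_term_nonneg_le n). pose proof (Cmod_bilat_term_neg_le n). lra.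
Qed.

Lemma lhs_series_exists : exists S1, Cseries lhs_term S1.
Proof.
  pose proof (qpoch_lb_pos q).
  apply (Cseries_geometric_dominated (/ (qpoch_lb q * qpoch_lb q)) r).
  - left. apply Rinv_0_lt_compat. nra.
  - split; [apply Cmod_ge0 | exact hq].
  - exact Cmod_lhs_term_le.
Qed.

Lemma bilat_series_exist :
  exists Sp Sn : Cplx, Cseries (fun n => bilat_term q (Z.of_nat n)) Sp /\
                Cseries (fun m => bilat_term q (- Z.of_nat (S m))%Z) Sn.
Proof.
  pose proof (Cmod_ge0 q).
  assert (HK : 0 <= / (1 - r)) by (left; apply Rinv_0_lt_compat; lra).
  destruct (Cseries_geometric_dominated _ r HK (conj H hq) _ Cmod_bilat_term_nonneg_le) as [Sp Hp].
  destruct (Cseries_geometric_dominated _ r HK (conj H hq) _ Cmod_bilat_term_neg_le) as [Sn Hn].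
  exists Sp, Sn. split; assumption.
Qed.

Lemma rhs_series_split Sp Sn :
  Cseries (fun n => bilat_term q (Z.of_nat n)) Sp ->
  Cseries (fun m => bilat_term q (- Z.of_nat (S m))%Z) Sn ->
  Cseries rhs_term (Cadd Sp Sn).
Proof.
  intros Hp Hn. unfold Cseries.
  apply (Ccv_ext (fun N => Cadd (Csum (fun n => bilat_term q (Z.of_nat n)) N)
                                (Csum (fun m => bilat_term q (- Z.of_nat (S m))%Z) N))).
  - intro N. rewrite <- Csum_add. apply Csum_ext_lt. intros n _. symmetry. apply rhs_term_split.
  - apply Ccv_add; assumption.
Qed.

Lemma Cmod_p_bounds n : qpoch_lb q <= Cmod (p n) <= qpoch_ub q.
Proof. pose proof (Cmod_ge0 q). split; [apply qpoch_Cmod_ge | apply qpoch_Cmod_le]; auto; lra. Qed.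

Lemma qpoch_lb_le_ub : qpoch_lb q <= qpoch_ub q.
Proof. destruct (Cmod_p_bounds O). lra. Qed.

Lemma Cmod_qpoch_ratio_le N n :
  Cmod (Cdiv (p N) (p (N - n))) <= qpoch_ub q / qpoch_lb q.
Proof.
  pose proof (qpoch_lb_pos q).
  rewrite Cmod_div by apply p_neq0, hq.
  pose proof (Cmod_p_bounds N). pose proof (Cmod_p_bounds (N - n)).
  unfold Rdiv. apply Rmult_le_compat; try lra.
  - left. apply Rinv_0_lt_compat. lra.
  - apply Rinv_le_contravar; lra.
Qed.

Lemma Cmod_qpoch_ratio2_le N n :
  Cmod (Cdiv (Cmul (Cadd Cone Cone) (p N)) (Cmul (p (N - n)) (p (N + n + 1))))
  <= 2 * qpoch_ub q / (qpoch_lb q * qpoch_lb q).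
Proof.
  pose proof (qpoch_lb_pos q).
  rewrite Cmod_div by (apply Cmul_neq0; apply p_neq0, hq).
  rewrite !Cmod_mul, Cmod_two.
  pose proof (Cmod_p_bounds N). pose proof (Cmod_p_bounds (N - n)). pose proof (Cmod_p_bounds (N + n + 1)).
  unfold Rdiv. apply Rmult_le_compat; try lra.
  - left. apply Rinv_0_lt_compat. nra.
  - apply Rinv_le_contravar; nra.
Qed.

Variable P : Cplx.
Hypothesis HP : qpoch_inf q q P.
Hypothesis HPlb : qpoch_lb q <= Cmod P.

Lemma qpoch_ratio_cv n : Ccv (fun N => Cdiv (p N) (p (N - n))) Cone.
Proof.
  pose proof (qpoch_lb_pos q).
  assert (HP0 : P <> Czero) by (apply Cmod_gt0_neq0; lra).
  replace Cone with (Cdiv P P) by (field; exact HP0).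
  apply Ccv_div; [exact HP0 | exact HP | apply Ccv_reindex_sub, HP].
Qed.

Lemma qpoch_ratio2_cv n :
  Ccv (fun N => Cdiv (Cmul (Cadd Cone Cone) (p N)) (Cmul (p (N - n)) (p (N + n + 1))))
      (Cdiv (Cadd Cone Cone) P).
Proof.
  pose proof (qpoch_lb_pos q).
  assert (HP0 : P <> Czero) by (apply Cmod_gt0_neq0; lra).
  replace (Cdiv (Cadd Cone Cone) P) with (Cdiv (Cmul (Cadd Cone Cone) P) (Cmul P P)) by (field; exact HP0).
  apply Ccv_div; [apply Cmul_neq0; exact HP0 | apply Ccv_scal, HP |].
  apply Ccv_mul; [apply Ccv_reindex_sub, HP|].
  apply (Ccv_ext _ _ _ (fun N => f_equal p (Nat.add_assoc N n 1))), (Ccv_reindex_add _ _ (n + 1)), HP.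
Qed.

Lemma finite_identity N :
  Csum (fun n => Cmul (Cdiv (p N) (p (N - n))) (lhs_term n)) (S N) =
  Csum (fun n => Cmul (Cdiv (Cmul (Cadd Cone Cone) (p N)) (Cmul (p (N - n)) (p (N + n + 1))))
                      (rhs_term n)) (S N).
Proof.
  transitivity (Cmul (p N) (Csum (fun n => Cdiv (Cmul (Cpow q (n * n + n)) (beta q n)) (p (N - n))) (S N))).
  { rewrite <- Csum_scal. apply Csum_ext_lt. intros n _.
    rewrite lhs_term_eq. pose proof (p_neq0 q hq (N - n)). Cfield. }
  rewrite (bailey_lemma_finite q hq _ _ N (bailey_pair_alpha_beta q hq)), <- Csum_scal.
  apply Csum_ext_lt. intros n _. rewrite rhs_term_eq.
  pose proof (p_neq0 q hq (N - n)). pose proof (p_neq0 q hq (N + n + 1)). Cfield.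
Qed.

Lemma limit_identity S1 S2 :
  Cseries lhs_term S1 -> Cseries rhs_term S2 -> S1 = Cmul (Cdiv (Cadd Cone Cone) P) S2.
Proof.
  intros H1 H2. pose proof (qpoch_lb_pos q) as HL. pose proof (qpoch_lb_le_ub) as HU.
  pose proof (Cmod_ge0 q) as Hr0.
  assert (L1 : Ccv (fun N => Csum (fun n => Cmul (Cdiv (p N) (p (N - n))) (lhs_term n)) (S N))
                   (Cmul Cone S1)).
  { apply (Ccv_weighted_series _ _ _ _ (/ (qpoch_lb q * qpoch_lb q)) (qpoch_ub q / qpoch_lb q) r);
      auto using qpoch_ratio_cv, Cmod_lhs_term_le, Cmod_qpoch_ratio_le.
    - left. apply Rinv_0_lt_compat. nra.
    - apply Rmult_le_pos; [lra | left; apply Rinv_0_lt_compat; lra]. }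
  assert (L2 : Ccv (fun N => Csum (fun n => Cmul (Cdiv (Cmul (Cadd Cone Cone) (p N))
                                                   (Cmul (p (N - n)) (p (N + n + 1))))
                                             (rhs_term n)) (S N))
                   (Cmul (Cdiv (Cadd Cone Cone) P) S2)).
  { apply (Ccv_weighted_series _ _ _ _ (2 / (1 - r)) (2 * qpoch_ub q / (qpoch_lb q * qpoch_lb q)) r);
      auto using qpoch_ratio2_cv, Cmod_rhs_term_le, Cmod_qpoch_ratio2_le.
    - apply Rmult_le_pos; [lra | left; apply Rinv_0_lt_compat; lra].
    - apply Rmult_le_pos; [lra | left; apply Rinv_0_lt_compat; nra]. }
  replace S1 with (Cmul Cone S1) by ring.
  apply (Ccv_unique _ _ _ L1). apply (Ccv_ext _ _ _ (fun N => eq_sym (finite_identity N)) L2).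
Qed.

End Limit.

Theorem mainTheorem4 (q : Cplx) (hq : Cmod q < 1) :
  exists (P S1 S2 Sp Sn : Cplx),
    qpoch_inf q q P /\
    Cseries (fun n => Cdiv (Cpow q (n * n + n))
                (Cmul (Cmul (qpoch (Copp q) q n) (qpoch (Copp q) q n))
                      (Cadd Cone (Cpow q (S n))))) S1 /\
    Cseries (fun n => Cdiv (Cmul (Cmul (Csign n) (Cpow q (3 * n * (n + 1) / 2)))
                                 (Csub Cone (Cpow q (2 * n + 1))))
                (Cmul (Cadd Cone (Cpow q n)) (Cadd Cone (Cpow q (S n))))) S2 /\
    Cseries (fun n => bilat_term q (Z.of_nat n)) Sp /\
    Cseries (fun m => bilat_term q (- Z.of_nat (S m))%Z) Sn /\
    S1 = Cmul (Cdiv (Cadd Cone Cone) P) S2 /\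
    S1 = Cmul (Cdiv (Cadd Cone Cone) P) (Cadd Sp Sn).
Proof.
  destruct (qpoch_inf_exists q q hq (Rle_refl _)) as [P [HP HPlb]].
  destruct (lhs_series_exists q hq) as [S1 H1].
  destruct (bilat_series_exist q hq) as [Sp [Sn [Hp Hn]]].
  pose proof (rhs_series_split q hq Sp Sn Hp Hn) as H2.
  pose proof (limit_identity q hq P HP HPlb S1 (Cadd Sp Sn) H1 H2) as E.
  exists P, S1, (Cadd Sp Sn), Sp, Sn. repeat split; assumption.
Qed.
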